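(* A norm $\gamma$ on $\mathbb{R}^d$ is uniformly robust if and only if $\mathrm{EH}_\gamma(A)$ is bounded for every finite set $A\subset\mathbb{R}^d$.
   Context: A norm is a symmetric gauge (Minkowski functional of a symmetric convex compact set $B_\gamma$ with $0$ in its interior); its skewness $\sigma=\sup_{x\ne0}\gamma(x)/\gamma(-x)$ equals $1$. $\gamma^\circ$ is the dual norm with unit ball $B_{\gamma^\circ}$. For weighted sets, $(D,w)+(C,v)$ is $D\cup C$ with weights added at common points. A Fermat–Weber point of a finite positively weighted set is a minimizer of $x\mapsto\sum_s u_s\gamma(x-s)$. The gauge $\gamma$ is called uniformly robust if for every finite set $D$ with positive weights $w$ (total $w_D$) there is a bounded set $K$ such that for every finite set $C$ with positive weights $v$ satisfying $\sigma v_C<w_D$, all Fermat–Weber points of $(D,w)+(C,v)$ lie in $K$. For $p\in B_{\gamma^\circ}$: if $\gamma^\circ(p)=1$, $N(p)=\mathbb{R}_{\ge0}F(p)$ with $F(p)=\{x\in B_\gamma:\langle p,x\rangle=1\}$; otherwise $N(p)=\{0\}$. For finite $S$ and $\pi=(p_s)_{s\in S}\subset B_{\gamma^\circ}$, $C_\pi=\bigcap_{s\in S}(s+N(p_s))$; a nonempty $C_\pi$ is an elementary convex set for $S$; $\mathrm{EH}_\gamma(S)$ is the union of all bounded elementary convex sets for $S$. *)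

From HB Require Import structures.
From mathcomp Require Import all_boot all_order all_algebra.
From mathcomp Require Import boolp classical_sets reals.
Set Implicit Arguments. Unset Strict Implicit. Unset Printing Implicit Defensive.
Import Order.TTheory GRing.Theory Num.Theory.
Local Open Scope ring_scope.
Local Open Scope classical_set_scope.

Section FW.
Variables (R : realType) (d : nat).
Notation vec := 'rV[R]_d.

Definition inner (p x : vec) : R := \sum_(i < d) p 0 i * x 0 i.

Definition is_norm (g : vec -> R) : Prop :=
  [/\ forall x, g x = 0 -> x = 0,
      forall (t : R) x, g (t *: x) = `|t| * g x
    & forall x y, g (x + y) <= g x + g y].

Definition ball_g (g : vec -> R) : set vec := [set x | g x <= 1].

Definition dual_g (g : vec -> R) (p : vec) : R :=
  sup [set inner p x | x in ball_g g].

Definition skewness (g : vec -> R) : R :=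
  sup [set g x / g (- x) | x in [set x : vec | x != 0]].

Definition bounded_set (A : set vec) : Prop :=
  exists M : R, forall x, A x -> forall i, `|x 0 i| <= M.

Definition Fface (g : vec -> R) (p : vec) : set vec :=
  [set x | ball_g g x /\ inner p x = 1].

Definition Ncone (g : vec -> R) (p : vec) : set vec :=
  if dual_g g p == 1 then
    [set y | exists (t : R) (x : vec), 0 <= t /\ Fface g p x /\ y = t *: x]
  else [set 0].

Definition Cpi (g : vec -> R) (S : seq vec) (pi : vec -> vec) : set vec :=
  [set x | forall s, s \in S -> exists y, Ncone g (pi s) y /\ x = s + y].

Definition admissible (g : vec -> R) (S : seq vec) (pi : vec -> vec) : Prop :=
  forall s, s \in S -> dual_g g (pi s) <= 1.

Definition EH (g : vec -> R) (S : seq vec) : set vec :=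
  [set x | exists pi, admissible g S pi /\ Cpi g S pi !=set0 /\
                      bounded_set (Cpi g S pi) /\ Cpi g S pi x].

Definition wset (D : seq vec) (w : vec -> R) : Prop :=
  uniq D /\ forall s, s \in D -> 0 < w s.

Definition total_weight (D : seq vec) (w : vec -> R) : R := \sum_(s <- D) w s.

Definition wsum_pts (D C : seq vec) : seq vec := undup (D ++ C).
Definition wsum_wt (D : seq vec) (w : vec -> R) (C : seq vec) (v : vec -> R)
  : vec -> R :=
  fun s => (if s \in D then w s else 0) + (if s \in C then v s else 0).

Definition fw_obj (g : vec -> R) (P : seq vec) (u : vec -> R) (x : vec) : R :=
  \sum_(s <- P) u s * g (x - s).

Definition FW_point (g : vec -> R) (P : seq vec) (u : vec -> R) (x : vec) : Prop :=
  forall y, fw_obj g P u x <= fw_obj g P u y.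

Definition uniformly_robust (g : vec -> R) : Prop :=
  forall (D : seq vec) (w : vec -> R), wset D w ->
  exists K : set vec, bounded_set K /\
    forall (C : seq vec) (v : vec -> R), wset C v ->
      skewness g * total_weight C v < total_weight D w ->
      forall x, FW_point g (wsum_pts D C) (wsum_wt D w C v) x -> K x.

End FW.

(* If every EH(A) is bounded: at a Fermat-Weber point x of (D,w)+(C,v), a
   subdifferential sum rule (from a finite-dimensional Hahn-Banach theorem)
   yields dual vectors p_s with g°(p_s) <= 1 and <p_s, x - s> = g (x - s)
   that balance, sum_D w_s p_s + sum_C v_s p_s = 0.  Then x lies in the
   elementary convex set C_pi of D, on which (w_D - v_C) g(y) is bounded
   above, so x is in EH(D) and K := EH(D) works.
   Conversely, let x lie in a bounded elementary convex set C_pi of A and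
   q = sum_s p_s.  A bounded C_pi contains no ray y + t z with
   <p_s, z> = g z for all s, which forces g°(q) < |A|.  Giving x a weight v
   with g°(q) <= v < |A| makes x a Fermat-Weber point of (A,1) + (x,v), so
   uniform robustness (with sigma = 1) confines x to a set independent of pi. *)

From HB Require Import structures.
From mathcomp Require Import all_boot all_order all_algebra.
From mathcomp Require Import boolp classical_sets reals topology normedtype derive.
From mathcomp Require Import lra.
Set Implicit Arguments. Unset Strict Implicit. Unset Printing Implicit Defensive.
Import Order.TTheory GRing.Theory Num.Theory.
Import numFieldTopology.Exports numFieldNormedType.Exports.
Local Open Scope ring_scope.
Local Open Scope classical_set_scope.

Lemma normr_coord_le (R : realType) (d : nat) (x : 'rV[R]_d) i : `|x 0 i| <= `|x|.
Proof. by rewrite (_ : `|x| = mx_norm x) // mx_normrE; exact: (le_bigmax _ _ (0, i)). Qed.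

Lemma lipschitz_continuous_rV (R : realType) (d : nat) (f : 'rV[R]_d -> R) (K : R) :
  0 <= K -> (forall x y, `|f y - f x| <= K * `|y - x|) -> continuous f.
Proof.
move=> K0 Hf x; apply/(@cvgrPdist_lt _ _ _ _ (nbhs_filter x)) => e e0.
apply/(@nbhs_normP R [the pseudoMetricNormedZmodType R of (matrix R 1 d)] x).
exists (e / (K + 1)); first by rewrite /= divr_gt0 //; lra.
move=> y /= hxy; rewrite distrC (le_lt_trans (Hf _ _)) // distrC.
apply: (le_lt_trans (y := (K + 1) * `|x - y|)); first by rewrite ler_wpM2r //; lra.
by rewrite mulrC -ltr_pdivlMr //; lra.
Qed.

Lemma delta_mx_neq0 (R : nzRingType) (d : nat) (i : 'I_d) :
  delta_mx 0 i != 0 :> 'rV[R]_d.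
Proof. by apply/eqP => /rowP/(_ i); rewrite !mxE !eqxx => /eqP; rewrite oner_eq0. Qed.

Lemma bounded_set_dim0 (R : realType) (d : nat) (A : set 'rV[R]_d) :
  d = 0%N -> bounded_set A.
Proof. by move=> d0; exists 0 => x _ i; have := ltn_ord i; rewrite {2}d0. Qed.

Section Norm.
Variables (R : realType) (d : nat) (g : 'rV[R]_d -> R).
Hypothesis hg : is_norm g.
Local Notation vec := 'rV[R]_d.

Lemma g_eq0 x : g x = 0 -> x = 0. Proof. by case: hg => h _ _; exact: h. Qed.
Lemma gZ t x : g (t *: x) = `|t| * g x. Proof. by case: hg => _ h _; exact: h. Qed.
Lemma gD x y : g (x + y) <= g x + g y. Proof. by case: hg => _ _ h; exact: h. Qed.

Lemma g0 : g 0 = 0.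
Proof. by rewrite -(scale0r (0 : vec)) gZ normr0 mul0r. Qed.

Lemma gN x : g (- x) = g x.
Proof. by rewrite -scaleN1r gZ normrN normr1 mul1r. Qed.

Lemma g_ge0 x : 0 <= g x.
Proof. by have := gD x (- x); rewrite subrr g0 gN => h; lra. Qed.

Lemma g_gt0 x : x != 0 -> 0 < g x.
Proof. by move=> x0; rewrite lt_def g_ge0 andbT; apply: contra x0 => /eqP/g_eq0->. Qed.

Lemma gZp t x : 0 <= t -> g (t *: x) = t * g x.
Proof. by move=> t0; rewrite gZ ger0_norm. Qed.

Lemma gB x y : g x - g y <= g (x - y).
Proof. by have := gD (x - y) y; rewrite subrK => h; lra. Qed.

Lemma g_sum (I : Type) (r : seq I) (F : I -> vec) :
  g (\sum_(i <- r) F i) <= \sum_(i <- r) g (F i).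
Proof.
elim: r => [|a r IH]; first by rewrite !big_nil g0.
by rewrite !big_cons; apply: le_trans (gD _ _) _; exact: lerD.
Qed.

Lemma ball_g_normalize x : x != 0 -> ball_g g ((g x)^-1 *: x).
Proof.
move=> x0; have gx := g_gt0 x0.
by rewrite /ball_g /= gZp ?invr_ge0 ?(ltW gx) // mulVf ?gt_eqF.
Qed.

Lemma g_le_mx_norm : exists K, 0 <= K /\ forall x, g x <= K * `|x|.
Proof.
exists (\sum_i g (delta_mx 0 i)); split; first by apply: sumr_ge0 => i _; exact: g_ge0.
move=> x; rewrite {1}(row_sum_delta x); apply: le_trans (g_sum _ _) _.
rewrite mulr_suml; apply: ler_sum => i _.
by rewrite gZ mulrC ler_wpM2l ?g_ge0 // normr_coord_le.
Qed.

Lemma g_continuous : continuous g.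
Proof.
have [K [K0 HK]] := g_le_mx_norm; apply: (lipschitz_continuous_rV K0) => x y.
have := gB y x; have := gB x y; rewrite -[x - y]opprB gN => h1 h2.
by apply: le_trans (HK _); rewrite ler_norml; apply/andP; split; lra.
Qed.

(* [g] attains a positive minimum on the compact unit sphere of the max-norm. *)
Lemma mx_norm_le_g : exists M, 0 <= M /\ forall x : vec, `|x| <= M * g x.
Proof.
pose S := [set x : vec | `|x| = 1].
have unitS x : x != 0 -> S (`|x|^-1 *: x).
  by move=> x0; rewrite /S /= normrZ normrV ?unitfE ?normr_eq0 // normr_id mulVf ?normr_eq0.
have [S0|S0] := pselect (S !=set0); last first.
  exists 0; split => // x; have [->|x0] := eqVneq x 0; first by rewrite normr0 mul0r.
  by case: S0; exists (`|x|^-1 *: x); exact: unitS.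
have cS : compact S.
  apply: bounded_closed_compact.
    by exists 1; split; [exact: num_real | move=> M hM x /= ->; rewrite ltW].
  apply: (@preimage_closed _ _ (fun x : vec => `|x|) [set 1]); last exact: closed_eq.
  by move=> x _; exact: norm_continuous.
have [c /[!inE] Sc cmin] := EVT_min_rV S0 cS (continuous_subspaceT g_continuous).
have gc : 0 < g c.
  apply: g_gt0; apply/eqP => c0.
  by move: Sc; rewrite c0 /S /= normr0 => /esym/eqP; rewrite oner_eq0.
exists (g c)^-1; split; first by rewrite invr_ge0 ltW.
move=> x; have [->|x0] := eqVneq x 0; first by rewrite normr0 g0 mulr0.
have := cmin _ (mem_set (unitS x x0)); rewrite gZp ?invr_ge0 //.
by rewrite ler_pdivlMl ?normr_gt0 // mulrC -ler_pdivlMl.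
Qed.

Lemma coord_le_g : exists M, 0 <= M /\ forall (x : vec) i, `|x 0 i| <= M * g x.
Proof.
have [M [M0 HM]] := mx_norm_le_g; exists M; split => // x i.
exact: le_trans (normr_coord_le _ _) (HM x).
Qed.

End Norm.

Section Inner.
Variables (R : realType) (d : nat).
Local Notation vec := 'rV[R]_d.
Implicit Types p q x y : vec.

Lemma innerDr p x y : inner p (x + y) = inner p x + inner p y.
Proof. by rewrite /inner -big_split; apply: eq_bigr => i _; rewrite mxE mulrDr. Qed.
Lemma innerDl p q x : inner (p + q) x = inner p x + inner q x.
Proof. by rewrite /inner -big_split; apply: eq_bigr => i _; rewrite mxE mulrDl. Qed.
Lemma innerZr p t x : inner p (t *: x) = t * inner p x.
Proof. by rewrite /inner mulr_sumr; apply: eq_bigr => i _; rewrite mxE mulrCA. Qed.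
Lemma innerZl p t x : inner (t *: p) x = t * inner p x.
Proof. by rewrite /inner mulr_sumr; apply: eq_bigr => i _; rewrite mxE mulrA. Qed.
Lemma inner0r p : inner p 0 = 0.
Proof. by rewrite -(scale0r (0 : vec)) innerZr mul0r. Qed.
Lemma inner0l x : inner 0 x = 0.
Proof. by rewrite -(scale0r (0 : vec)) innerZl mul0r. Qed.
Lemma innerNr p x : inner p (- x) = - inner p x.
Proof. by rewrite -scaleN1r innerZr mulN1r. Qed.
Lemma innerNl p x : inner (- p) x = - inner p x.
Proof. by rewrite -scaleN1r innerZl mulN1r. Qed.
Lemma innerBr p x y : inner p (x - y) = inner p x - inner p y.
Proof. by rewrite innerDr innerNr. Qed.

Lemma inner_suml (I : Type) (r : seq I) (F : I -> vec) x :
  inner (\sum_(i <- r) F i) x = \sum_(i <- r) inner (F i) x.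
Proof.
elim: r => [|a r IH]; first by rewrite !big_nil inner0l.
by rewrite !big_cons innerDl IH.
Qed.

Lemma inner_deltar p i : inner p (delta_mx 0 i) = p 0 i.
Proof.
rewrite /inner (bigD1 i) //= big1 ?addr0; first by rewrite mxE !eqxx mulr1.
by move=> j ji; rewrite mxE (negbTE ji) andbF mulr0.
Qed.

Lemma inner_deltal i x : inner (delta_mx 0 i) x = x 0 i.
Proof.
rewrite /inner (bigD1 i) //= big1 ?addr0; first by rewrite mxE !eqxx mul1r.
by move=> j ji; rewrite mxE (negbTE ji) andbF mul0r.
Qed.

Lemma normr_inner_le p x : `|inner p x| <= (\sum_i `|p 0 i|) * `|x|.
Proof.
rewrite /inner mulr_suml; apply: le_trans (ler_norm_sum _ _ _) _.
by apply: ler_sum => i _; rewrite normrM ler_wpM2l // normr_coord_le.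
Qed.

Lemma inner_ge0_eq0 p : (forall x, 0 <= inner p x) -> p = 0.
Proof.
move=> h; have sq_ge0 i : 0 <= p 0 i * p 0 i by rewrite -expr2 sqr_ge0.
have /eqP : inner p p = 0.
  by apply/eqP; rewrite eq_le h andbT -oppr_ge0 -innerNr.
rewrite psumr_eq0 // => /allP pp0; apply/rowP => i; rewrite mxE.
by apply/eqP; have := pp0 i (mem_index_enum _); rewrite mulf_eq0 orbb.
Qed.

End Inner.

Section Dual.
Variables (R : realType) (d : nat) (g : 'rV[R]_d -> R).
Hypothesis hg : is_norm g.
Local Notation vec := 'rV[R]_d.
Implicit Types p q x y : vec.

Lemma ball_g0 : ball_g g 0.
Proof. by rewrite /ball_g /= (g0 hg). Qed.

Lemma dual_g_has_sup p : has_sup [set inner p x | x in ball_g g].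
Proof.
split; first by exists (inner p 0), 0 => //; exact: ball_g0.
have [M [M0 HM]] := mx_norm_le_g hg.
exists ((\sum_i `|p 0 i|) * M) => _ [x /= gx1 <-].
apply: le_trans (ler_norm _) _; apply: le_trans (normr_inner_le _ _) _.
rewrite ler_wpM2l ?sumr_ge0 //; apply: le_trans (HM x) _.
by rewrite -[leRHS]mulr1 ler_wpM2l.
Qed.

Lemma dual_g_ub p x : ball_g g x -> inner p x <= dual_g g p.
Proof. by move=> hx; apply: sup_upper_bound (dual_g_has_sup p) _ _; exists x. Qed.

Lemma dual_g_le p c : (forall x, ball_g g x -> inner p x <= c) -> dual_g g p <= c.
Proof.
move=> h; apply: ge_sup; first by exists (inner p 0), 0 => //; exact: ball_g0.
by move=> _ [x hx <-]; exact: h.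
Qed.

Lemma dual_g_ge0 p : 0 <= dual_g g p.
Proof. by rewrite -(inner0r p); apply: dual_g_ub; exact: ball_g0. Qed.

Lemma inner_le_dual_g p x : inner p x <= dual_g g p * g x.
Proof.
have [->|x0] := eqVneq x 0; first by rewrite inner0r (g0 hg) mulr0.
have := dual_g_ub p (ball_g_normalize hg x0).
by rewrite innerZr ler_pdivrMl ?(g_gt0 hg) // mulrC.
Qed.

Lemma inner_le_g p x : dual_g g p <= 1 -> inner p x <= g x.
Proof.
move=> hp; apply: le_trans (inner_le_dual_g p x) _.
by rewrite -[leRHS]mul1r ler_wpM2r ?(g_ge0 hg).
Qed.

Lemma dual_g_attained p : exists2 z, ball_g g z & inner p z = dual_g g p.
Proof.
have cB : compact (ball_g g).
  apply: bounded_closed_compact.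
    have [M [M0 HM]] := mx_norm_le_g hg.
    exists M; split; first exact: num_real.
    move=> N hN x /= gx1; apply/ltW/le_lt_trans/hN; apply: le_trans (HM x) _.
    by rewrite -[leRHS]mulr1 ler_wpM2l.
  apply: (@preimage_closed _ _ g [set r | r <= 1]); last exact: closed_le.
  by move=> x _; exact: g_continuous.
have cf : continuous (inner p).
  apply: (@lipschitz_continuous_rV _ _ _ (\sum_i `|p 0 i|)); first exact: sumr_ge0.
  by move=> x y; rewrite -innerBr; exact: normr_inner_le.
have [c /[!inE] Bc cmax] := EVT_max_rV (ex_intro _ 0 ball_g0) cB (continuous_subspaceT cf).
exists c => //; apply/eqP; rewrite eq_le dual_g_ub //=.
by apply: dual_g_le => x hx; apply: cmax; rewrite inE.
Qed.

Lemma NconeE p y : dual_g g p <= 1 -> Ncone g p y <-> inner p y = g y.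
Proof.
move=> hp; rewrite /Ncone; case: ifPn => [/eqP p1|p1].
  split=> [[t [x [t0 [[/= gx1 px1] ->]]]]|pyg].
    have gx1' : g x = 1 by apply/eqP; rewrite eq_le gx1 -[X in X <= _]px1 inner_le_g.
    by rewrite innerZr px1 (gZp hg) // gx1'.
  have [->|y0] := eqVneq y 0.
    have [z hz pz] := dual_g_attained p.
    by exists 0, z; rewrite scale0r; do !split => //; rewrite pz p1.
  exists (g y), ((g y)^-1 *: y); split; first exact/ltW/(g_gt0 hg).
  split; last by rewrite scalerA mulfV ?scale1r // gt_eqF ?(g_gt0 hg).
  by split; [exact: ball_g_normalize | rewrite innerZr pyg mulVf // gt_eqF ?(g_gt0 hg)].
have p_lt1 : dual_g g p < 1 by rewrite lt_neqAle p1.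
split=> [->|pyg]; first by rewrite inner0r (g0 hg).
apply: (g_eq0 hg); apply/eqP; rewrite eq_le (g_ge0 hg) andbT.
have := inner_le_dual_g p y; rewrite pyg => h.
have := g_ge0 hg y; have := dual_g_ge0 p; nra.
Qed.

Lemma skewness_norm : (0 < d)%N -> skewness g = 1.
Proof.
move=> d0; rewrite /skewness.
suff -> : [set g x / g (- x) | x in [set x : vec | x != 0]] = [set 1] by rewrite sup1.
have g_ratio x : x != 0 -> g x / g (- x) = 1.
  by move=> x0; rewrite (gN hg) mulfV // gt_eqF ?(g_gt0 hg).
apply/seteqP; split => [_ [x /= x0 <-]|_ ->]; first exact: g_ratio.
have e0 : delta_mx 0 (Ordinal d0) != 0 :> vec := delta_mx_neq0 _ _.
by exists (delta_mx 0 (Ordinal d0)); [exact: e0 | exact: g_ratio e0].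
Qed.

End Dual.

Section Sublinear.
Variables (R : realType) (d : nat).
Local Notation vec := 'rV[R]_d.
Implicit Types (f h : vec -> R) (p r x y z : vec).

Definition sublinear f :=
  (forall x y, f (x + y) <= f x + f y) /\ (forall a x, 0 < a -> f (a *: x) = a * f x).

Lemma sublinear0 f : sublinear f -> f 0 = 0.
Proof. by case=> _ fZ; have := fZ 2 0 (ltr0Sn _ 1); rewrite scaler0 => e; lra. Qed.

Definition span_first (k : nat) : set vec :=
  [set r | forall i : 'I_d, (k <= i)%N -> r 0 i = 0].

(* The one-dimensional Hahn-Banach step. *)
Lemma sublinear_minorant_extend f k c : sublinear f -> (k < d)%N ->
  (forall r, span_first k r -> inner c r <= f r) ->
  exists c', forall r, span_first k.+1 r -> inner c' r <= f r.
Proof.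
move=> [fD fZ] kd hc; pose e : vec := delta_mx 0 (Ordinal kd).
pose V := span_first k.
have VD r r' : V r -> V r' -> V (r + r') by move=> h h' i ki; rewrite mxE h ?h'// addr0.
have VZ a r : V r -> V (a *: r) by move=> h i ki; rewrite mxE h // mulr0.
have innerZV a r : 0 < a -> inner c r = a * inner c (a^-1 *: r).
  by move=> a0; rewrite innerZr mulrA mulfV ?gt_eqF // mul1r.
have gap r r' : V r -> V r' -> inner c r - f (r - e) <= f (r' + e) - inner c r'.
  move=> hr hr'; have := hc _ (VD _ _ hr hr'); rewrite innerDr.
  by have := fD (r - e) (r' + e); rewrite addrCA subrK addrC => h1 h2; lra.
pose L := [set inner c r - f (r - e) | r in V].
have hL : has_sup L.
  split; first by exists (inner c 0 - f (0 - e)), 0 => // i; rewrite mxE.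
  by exists (f (0 + e) - inner c 0) => _ [r hr <-]; apply: gap => // i; rewrite mxE.
(* Any value between the two sides of [gap] extends [c] along [e]. *)
pose ck := sup L.
have ck_ge r : V r -> inner c r - f (r - e) <= ck.
  by move=> hr; apply: sup_upper_bound hL _ _; exists r.
have ck_le r : V r -> ck <= f (r + e) - inner c r.
  by move=> hr; apply: ge_sup; [case: hL | move=> _ [r' hr' <-]; exact: gap].
have extend_le r0 t : V r0 -> inner c r0 + t * ck <= f (r0 + t *: e).
  move=> hr0; have [t0|t0|->] := ltgtP t 0; last first.
    by rewrite scale0r mul0r !addr0; apply: hc.
  - have -> : r0 + t *: e = t *: (t^-1 *: r0 + e).
      by rewrite scalerDr scalerA mulfV ?gt_eqF // scale1r.
    rewrite fZ // (innerZV _ _ t0).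
    by have := ck_le _ (VZ t^-1 _ hr0) => /(ler_wpM2l (ltW t0)); lra.
  - have s0 : 0 < - t by rewrite oppr_gt0.
    have -> : r0 + t *: e = (- t) *: ((- t)^-1 *: r0 - e).
      by rewrite scalerBr scalerA mulfV ?gt_eqF // scale1r scaleNr opprK.
    rewrite fZ // (innerZV _ _ s0).
    by have := ck_ge _ (VZ (- t)^-1 _ hr0) => /(ler_wpM2l (ltW s0)); lra.
exists (c + (ck - c 0 (Ordinal kd)) *: e) => r hr.
have hr0 : V (r - r 0 (Ordinal kd) *: e).
  move=> i ki; rewrite !mxE; have [ik|ik] := eqVneq i (Ordinal kd).
    by rewrite ik eqxx mulr1 subrr.
  rewrite andbF mulr0 subr0; apply: hr; rewrite ltn_neqAle ki andbT.
  by apply: contra ik => /eqP ik; apply/eqP/val_inj; rewrite /= ik.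
have := extend_le _ (r 0 (Ordinal kd)) hr0; rewrite subrK.
rewrite innerDl innerZl inner_deltal innerBr innerZr inner_deltar; lra.
Qed.

Lemma sublinear_minorant f : sublinear f -> exists p, forall r, inner p r <= f r.
Proof.
move=> hf.
suff /(_ d (leqnn d)) [p hp] : forall k, (k <= d)%N ->
    exists p, forall r, span_first k r -> inner p r <= f r.
  by exists p => r; apply: hp => i; rewrite leqNgt ltn_ord.
elim=> [_|k IH kd]; last by have [c hc] := IH (ltnW kd); exact: sublinear_minorant_extend hc.
exists 0 => r hr; have -> : r = 0 by apply/rowP => i; rewrite mxE hr.
by rewrite inner0l (sublinear0 hf).
Qed.

(* The inf-convolution of [f] with [z |-> h (- z)]. *)
Definition infconv f h r := inf [set f (r + z) + h z | z in [set: vec]].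

Section Infconv.
Variables f h : vec -> R.
Hypotheses (hf : sublinear f) (hh : sublinear h) (fh : forall r, 0 <= f r + h r).

Lemma infconv_le r z : infconv f h r <= f (r + z) + h z.
Proof.
apply: ge_inf; last by exists z.
case: hf => fD _; exists (- f (- r)) => _ [z' _ <-].
by have := fD (r + z') (- r); rewrite addrC addKr; have := fh z'; lra.
Qed.

Lemma infconv_ge r c : (forall z, c <= f (r + z) + h z) -> c <= infconv f h r.
Proof. by move=> hc; apply: lb_le_inf => [|_ [z _ <-]//]; exists (f (r + 0) + h 0), 0. Qed.

Lemma sublinear_infconv : sublinear (infconv f h).
Proof.
case: (hf) => fD fZ; case: (hh) => hD hZ; split => [x y|a x a0].
  suff : infconv f h (x + y) - infconv f h y <= infconv f h x by lra.
  apply: infconv_ge => z1.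
  suff : infconv f h (x + y) - (f (x + z1) + h z1) <= infconv f h y by lra.
  apply: infconv_ge => z2; have := infconv_le (x + y) (z1 + z2).
  have := fD (x + z1) (y + z2); have := hD z1 z2.
  by rewrite addrACA; lra.
apply/eqP; rewrite eq_le; apply/andP; split.
  rewrite mulrC -ler_pdivrMr //; apply: infconv_ge => z.
  rewrite ler_pdivrMr // mulrC.
  by have := infconv_le (a *: x) (a *: z); rewrite -scalerDr fZ // hZ // -mulrDr.
apply: infconv_ge => z.
have -> : f (a *: x + z) + h z = a * (f (x + a^-1 *: z) + h (a^-1 *: z)).
  by rewrite mulrDr -fZ // -hZ // scalerDr !scalerA mulfV ?gt_eqF // !scale1r.
by rewrite ler_wpM2l ?(ltW a0) ?infconv_le.
Qed.

Lemma sublinear_sandwich : exists p, forall r, inner p r <= f r /\ - inner p r <= h r.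
Proof.
have [p hp] := sublinear_minorant sublinear_infconv.
exists p => r; split.
  apply: le_trans (hp r) _; apply: le_trans (infconv_le r 0) _.
  by rewrite addr0 (sublinear0 hh) addr0.
rewrite -innerNr; apply: le_trans (hp (- r)) _; apply: le_trans (infconv_le (- r) r) _.
by rewrite addNr (sublinear0 hf) add0r.
Qed.

End Infconv.

Lemma sublinear_sum_rule (S : seq vec) (chi : vec -> vec -> R) (p0 : vec) :
  uniq S -> (forall s, s \in S -> sublinear (chi s)) ->
  (forall r, 0 <= inner p0 r + \sum_(s <- S) chi s r) ->
  exists P : vec -> vec, (forall s, s \in S -> forall r, inner (P s) r <= chi s r)
    /\ p0 + \sum_(s <- S) P s = 0.
Proof.
elim: S p0 => [|s S IH] p0 /=.
  move=> _ _ h; exists (fun=> 0); split => //; rewrite big_nil addr0.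
  by apply: inner_ge0_eq0 => r; have := h r; rewrite big_nil addr0.
move=> /andP[sS uS] hchi h.
have hchiS t : t \in S -> sublinear (chi t) by move=> tS; apply: hchi; rewrite inE tS orbT.
pose G r := inner p0 r + \sum_(t <- S) chi t r.
have hG : sublinear G.
  split=> [x y|a x a0]; rewrite /G ?innerDr ?innerZr.
    suff : \sum_(t <- S) chi t (x + y) <= \sum_(t <- S) chi t x + \sum_(t <- S) chi t y by lra.
    rewrite -big_split /= !big_seq; apply: ler_sum => t /hchiS [+ _]; exact.
  rewrite mulrDr; congr (_ + _); rewrite mulr_sumr.
  by apply: eq_big_seq => t /hchiS [_ hZ]; exact: hZ.
have [|p hp] := sublinear_sandwich (hchi s (mem_head _ _)) hG.
  by move=> r; have := h r; rewrite big_cons /G; lra.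
have [|P [hP sumP]] := IH (p0 + p) uS hchiS.
  by move=> r; have := (hp r).2; rewrite innerDl /G; lra.
exists (fun t => if t == s then p else P t); split.
  move=> t; rewrite inE; have [-> _ r|ts /= tS] := eqVneq t s; first exact: (hp r).1.
  exact: hP.
rewrite big_cons eqxx addrA (eq_big_seq P) // => t tS.
by rewrite ifN //; apply: contraNneq sS => <-.
Qed.

End Sublinear.

Section DirDeriv.
Variables (R : realType) (d : nat) (g : 'rV[R]_d -> R).
Hypothesis hg : is_norm g.
Local Notation vec := 'rV[R]_d.
Implicit Types (a p r : vec) (t : R).

(* Since [g (r + t *: a) - t * g a = t * (g (a + t^-1 *: r) - g a)] decreases
   in [t], [dir_deriv a r] is the one-sided directional derivative of [g] at
   [a] in direction [r]. *)
Definition dir_deriv a r : R :=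
  inf [set g (r + t *: a) - t * g a | t in [set t | 0 <= t]].

Lemma secant_ge a r t : 0 <= t -> - g r <= g (r + t *: a) - t * g a.
Proof.
move=> t0; have := gD hg (r + t *: a) (- r).
by rewrite addrC addKr (gZp hg) // (gN hg); lra.
Qed.

Lemma secant_decreasing a r t T : 0 <= t -> t <= T ->
  g (r + T *: a) - T * g a <= g (r + t *: a) - t * g a.
Proof.
move=> t0 tT; have := gD hg (r + t *: a) ((T - t) *: a).
rewrite -addrA -scalerDl subrKC (gZp hg) ?subr_ge0 // mulrBl.
by have := g_ge0 hg a; lra.
Qed.

Lemma dir_deriv_le a r t : 0 <= t -> dir_deriv a r <= g (r + t *: a) - t * g a.
Proof.
move=> t0; apply: ge_inf; last by exists t.
by exists (- g r) => _ [t' t'0 <-]; exact: secant_ge.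
Qed.

Lemma dir_deriv_ge a r c :
  (forall t, 0 <= t -> c <= g (r + t *: a) - t * g a) -> c <= dir_deriv a r.
Proof.
move=> hc; apply: lb_le_inf => [|_ [t t0 <-]]; last exact: hc.
by exists (g (r + 0 *: a) - 0 * g a), 0 => /=.
Qed.

Lemma sublinear_dir_deriv a : sublinear (dir_deriv a).
Proof.
split=> [x y|c x c0].
  suff : dir_deriv a (x + y) - dir_deriv a y <= dir_deriv a x by lra.
  apply: dir_deriv_ge => t1 t10.
  suff : dir_deriv a (x + y) - (g (x + t1 *: a) - t1 * g a) <= dir_deriv a y by lra.
  apply: dir_deriv_ge => t2 t20; have := dir_deriv_le a (x + y) (addr_ge0 t10 t20).
  have := gD hg (x + t1 *: a) (y + t2 *: a).
  by rewrite addrACA -scalerDl mulrDl; lra.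
have secantZ t : g ((c *: x) + (c * t) *: a) - (c * t) * g a = c * (g (x + t *: a) - t * g a).
  by rewrite -scalerA -scalerDr (gZp hg) ?(ltW c0) // mulrBr mulrA.
apply/eqP; rewrite eq_le; apply/andP; split.
  rewrite mulrC -ler_pdivrMr //; apply: dir_deriv_ge => t t0.
  rewrite ler_pdivrMr // mulrC -secantZ.
  exact/dir_deriv_le/mulr_ge0/t0/ltW.
apply: dir_deriv_ge => t t0.
rewrite -[t](mulVKf (lt0r_neq0 c0)) secantZ ler_wpM2l ?(ltW c0) //.
by apply: dir_deriv_le; rewrite mulr_ge0 ?invr_ge0 ?(ltW c0).
Qed.

Lemma dir_deriv_approx (I : eqType) (P : seq I) (a : I -> vec) r e : 0 < e ->
  exists T, 0 < T /\ forall i, i \in P ->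
    g (r + T *: a i) - T * g (a i) <= dir_deriv (a i) r + e.
Proof.
move=> e0; elim: P => [|i P [T [T0 HT]]]; first by exists 1.
have hinf : has_inf [set g (r + t *: a i) - t * g (a i) | t in [set t | 0 <= t]].
  split; first by exists (g (r + 0 *: a i) - 0 * g (a i)), 0 => /=.
  by exists (- g r) => _ [t t0 <-]; exact: secant_ge.
have [_ /= [t t0 <-] ht] := inf_adherent e0 hinf.
exists (Num.max T t); split; first by rewrite lt_max T0.
move=> j; rewrite inE => /predU1P[->|jP].
  by apply/le_trans/ltW/ht/secant_decreasing; rewrite // le_max lexx orbT.
apply/le_trans/HT/jP/secant_decreasing; last by rewrite le_max lexx.
exact: ltW.
Qed.

Lemma dir_deriv_minorant a p : (forall r, inner p r <= dir_deriv a r) ->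
  dual_g g p <= 1 /\ inner p a = g a.
Proof.
move=> hp; have p_le_g r : inner p r <= g r.
  apply: le_trans (hp r) _; apply: le_trans (dir_deriv_le _ _ (lexx 0)) _.
  by rewrite scale0r addr0 mul0r subr0.
split; first by apply: (dual_g_le hg) => x; exact: le_trans (p_le_g x).
apply/eqP; rewrite eq_le (p_le_g a) /=.
have := le_trans (hp (- a)) (dir_deriv_le _ _ ler01).
by rewrite scale1r addNr (g0 hg) mul1r add0r innerNr; lra.
Qed.

End DirDeriv.

Section FermatWeber.
Variables (R : realType) (d : nat) (g : 'rV[R]_d -> R).
Hypothesis hg : is_norm g.
Local Notation vec := 'rV[R]_d.
Variables (P : seq vec) (u : vec -> R) (x : vec).
Hypotheses (u_gt0 : forall s, s \in P -> 0 < u s) (hx : FW_point g P u x).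

Lemma fw_dir_deriv_ge0 r : 0 <= \sum_(s <- P) u s * dir_deriv g (x - s) r.
Proof.
apply/ler_addgt0Pr => e e0.
pose U := \sum_(s <- P) u s.
have U0 : 0 <= U by rewrite /U big_seq sumr_ge0 // => s /u_gt0/ltW.
have e'0 : 0 < e / (U + 1) by rewrite divr_gt0 //; lra.
have [T [T0 HT]] := dir_deriv_approx hg P (fun s => x - s) r e'0.
(* Each secant at [T] is [T] times the increase of the objective from [x] to
   [x + T^-1 *: r]. *)
have secant_ge0 : 0 <= \sum_(s <- P) u s * (g (r + T *: (x - s)) - T * g (x - s)).
  have rescale s : r + T *: (x - s) = T *: (x + T^-1 *: r - s).
    by rewrite !scalerDr scalerN scalerA mulfV ?gt_eqF // scale1r addrAC addrC.
  under eq_bigr do rewrite rescale (gZp hg _ (ltW T0)) -mulrBr mulrCA mulrBr.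
  by rewrite -mulr_sumr sumrB mulr_ge0 ?(ltW T0) // subr_ge0; exact: hx.
apply: le_trans secant_ge0 _.
have -> : \sum_(s <- P) u s * dir_deriv g (x - s) r + e =
    \sum_(s <- P) u s * (dir_deriv g (x - s) r + e / (U + 1)) + (e - e / (U + 1) * U).
  under [X in _ = X + _]eq_bigr do rewrite mulrDr.
  by rewrite big_split /= -mulr_suml -/U; lra.
rewrite -[leLHS]addr0 lerD //; last first.
  rewrite subr_ge0 mulrAC -mulrA ler_piMr ?(ltW e0) // ler_pdivrMr; lra.
by rewrite !big_seq ler_sum // => s sP; rewrite ler_wpM2l ?(ltW (u_gt0 sP)) ?HT.
Qed.

Lemma fw_subgradients : uniq P ->
  exists pi : vec -> vec,
    (forall s, s \in P -> dual_g g (pi s) <= 1 /\ inner (pi s) (x - s) = g (x - s))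
    /\ \sum_(s <- P) u s *: pi s = 0.
Proof.
move=> uP; have [||Q [hQ sumQ]] := @sublinear_sum_rule _ _ P
    (fun s r => u s * dir_deriv g (x - s) r) 0 uP.
- move=> s sP; have [dD dZ] := sublinear_dir_deriv hg (x - s).
  split=> [a b|c a c0]; first by rewrite -mulrDr ler_wpM2l ?(ltW (u_gt0 sP)).
  by rewrite dZ // mulrCA.
- by move=> r; rewrite inner0l add0r; exact: fw_dir_deriv_ge0.
exists (fun s => (u s)^-1 *: Q s); split; last first.
  rewrite -[RHS]sumQ add0r; apply: eq_big_seq => s sP.
  by rewrite scalerA mulfV ?scale1r // gt_eqF ?u_gt0.
move=> s sP; apply: (dir_deriv_minorant hg) => r.
rewrite innerZl ler_pdivrMl ?u_gt0 //; exact: hQ.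
Qed.

End FermatWeber.

Section WeightedSum.
Variables (R : realType) (d : nat).
Local Notation vec := 'rV[R]_d.
Variables (D C : seq vec) (w v : vec -> R).

Lemma mem_wsum_pts s : (s \in wsum_pts D C) = (s \in D) || (s \in C).
Proof. by rewrite mem_undup mem_cat. Qed.

Lemma wsum_wt_gt0 : wset D w -> wset C v ->
  forall s, s \in wsum_pts D C -> 0 < wsum_wt D w C v s.
Proof.
move=> [_ wD] [_ vC] s; rewrite mem_wsum_pts /wsum_wt.
case: (boolP (s \in D)) => [/wD ws|_]; case: (boolP (s \in C)) => [/vC vs|_] //= _.
- exact: addr_gt0.
- by rewrite addr0.
- by rewrite add0r.
Qed.

Lemma big_wsum (T : lmodType R) (F : vec -> T) : uniq D -> uniq C ->
  \sum_(s <- wsum_pts D C) wsum_wt D w C v s *: F s =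
  \sum_(s <- D) w s *: F s + \sum_(s <- C) v s *: F s.
Proof.
move=> uD uC; rewrite /wsum_wt; under eq_bigr do rewrite scalerDl.
rewrite big_split /=.
have restrict (E : seq vec) (a : vec -> R) : uniq E -> {subset E <= wsum_pts D C} ->
    \sum_(s <- wsum_pts D C) (if s \in E then a s else 0) *: F s = \sum_(s <- E) a s *: F s.
  move=> uE sE; under eq_bigr => s _ do rewrite (fun_if (fun c => c *: F s)) scale0r.
  rewrite -big_mkcond -big_filter; apply: perm_big.
  apply: uniq_perm; rewrite ?filter_uniq ?undup_uniq // => s.
  by rewrite mem_filter; case sEb: (s \in E); rewrite //= sE.
by congr (_ + _); apply: restrict => // s sE; rewrite mem_wsum_pts sE ?orbT.
Qed.

Lemma big_wsum_mul (F : vec -> R) : uniq D -> uniq C ->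
  \sum_(s <- wsum_pts D C) wsum_wt D w C v s * F s =
  \sum_(s <- D) w s * F s + \sum_(s <- C) v s * F s.
Proof. exact: (@big_wsum R^o). Qed.

End WeightedSum.

Lemma bounded_set_ray (R : realType) (d : nat) (A : set 'rV[R]_d) y z :
  bounded_set A -> (forall t, 0 <= t -> A (y + t *: z)) -> z = 0.
Proof.
move=> [M hM] ray; apply/rowP => j; rewrite mxE; apply/eqP; apply: contraT => zj.
have zj0 : 0 < `|z 0 j| by rewrite normr_gt0.
pose t := (M + `|y 0 j| + 1) / `|z 0 j|.
have M0 : 0 <= M + `|y 0 j| + 1.
  by have := hM _ (ray 0 (lexx 0)) j; rewrite scale0r addr0; have := normr_ge0 (y 0 j); lra.
have t0 : 0 <= t by rewrite divr_ge0.
have := hM _ (ray t t0) j; rewrite !mxE.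
have tz : `|t * z 0 j| = M + `|y 0 j| + 1.
  by rewrite normrM ger0_norm // /t mulfVK ?gt_eqF.
by have := ler_normB (y 0 j + t * z 0 j) (y 0 j); rewrite addrC addrK tz; lra.
Qed.

Section Robust.
Variables (R : realType) (d : nat) (g : 'rV[R]_d -> R).
Hypothesis hg : is_norm g.
Local Notation vec := 'rV[R]_d.

Lemma bounded_set_g (A : set vec) M : (forall x, A x -> g x <= M) -> bounded_set A.
Proof.
move=> hM; have [K [K0 HK]] := coord_le_g hg.
by exists (K * M) => x Ax i; apply: le_trans (HK x i) _; rewrite ler_wpM2l ?hM.
Qed.

Lemma CpiE (A : seq vec) pi y : admissible g A pi ->
  Cpi g A pi y <-> forall s, s \in A -> inner (pi s) (y - s) = g (y - s).
Proof.
move=> adm; split=> [hy s sA|hy s sA].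
  by have [z [/(NconeE hg _ (adm s sA)) pz ->]] := hy s sA; rewrite addrC addKr.
by exists (y - s); rewrite subrKC; split => //; apply/(NconeE hg _ (adm s sA))/hy.
Qed.

Lemma Cpi_g_le (D C : seq vec) (w v : vec -> R) pi y :
  admissible g D pi -> admissible g C pi ->
  (forall s, s \in D -> 0 <= w s) -> (forall s, s \in C -> 0 <= v s) ->
  \sum_(s <- D) w s *: pi s + \sum_(s <- C) v s *: pi s = 0 ->
  Cpi g D pi y ->
  (total_weight D w - total_weight C v) * g y <=
    \sum_(s <- D) w s * (g s - inner (pi s) s).
Proof.
move=> admD admC w0 v0 balance /(CpiE _ admD) hy.
have weighted_inner (S : seq vec) (a : vec -> R) :
    \sum_(s <- S) a s * inner (pi s) y = inner (\sum_(s <- S) a s *: pi s) y.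
  by rewrite inner_suml; apply: eq_bigr => s _; rewrite innerZl.
have hD : \sum_(s <- D) w s * (g y - g s) <=
    \sum_(s <- D) w s * inner (pi s) y - \sum_(s <- D) w s * inner (pi s) s.
  rewrite -sumrB !big_seq ler_sum // => s sD.
  by rewrite -mulrBr -innerBr hy // ler_wpM2l ?w0 ?(gB hg).
have hC : \sum_(s <- D) w s * inner (pi s) y <= total_weight C v * g y.
  have balD : \sum_(s <- D) w s *: pi s = - \sum_(s <- C) v s *: pi s.
    by apply/eqP; rewrite -addr_eq0 balance.
  rewrite weighted_inner balD innerNl -innerNr inner_suml /total_weight mulr_suml.
  rewrite !big_seq ler_sum // => s sC.
  by rewrite innerZl ler_wpM2l ?v0 // -(gN hg y) inner_le_g ?admC.
have splitD (a b : vec -> R) :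
    \sum_(s <- D) w s * (a s - b s) = \sum_(s <- D) w s * a s - \sum_(s <- D) w s * b s.
  by rewrite -sumrB; apply: eq_bigr => s _; rewrite mulrBr.
move: hD hC; rewrite (splitD (fun=> g y)) splitD /total_weight mulrBl -mulr_suml; lra.
Qed.

Lemma uniformly_robust_of_bounded_EH :
  (forall A, bounded_set (EH g A)) -> uniformly_robust g.
Proof.
move=> hEH D w [uD wD]; exists (EH g D); split=> [|C v [uC vC] hskew x hx]; first exact: hEH.
have [pi [hpi balance]] :=
  fw_subgradients hg (wsum_wt_gt0 (conj uD wD) (conj uC vC)) hx (undup_uniq _).
rewrite big_wsum // in balance.
have adm (S : seq vec) : {subset S <= wsum_pts D C} -> admissible g S pi.
  by move=> SP s /SP /hpi [].
have admD : admissible g D pi by apply: adm => s sD; rewrite mem_wsum_pts sD.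
have admC : admissible g C pi by apply: adm => s sC; rewrite mem_wsum_pts sC orbT.
have Cx : Cpi g D pi x.
  by apply/(CpiE _ admD) => s sD; apply: (hpi s _).2; rewrite mem_wsum_pts sD.
exists pi; do !split => //; first by exists x.
have [d0|d_gt0] := posnP d; first exact: bounded_set_dim0.
rewrite skewness_norm // mul1r -subr_gt0 in hskew.
apply: (bounded_set_g (M := (\sum_(s <- D) w s * (g s - inner (pi s) s)) /
  (total_weight D w - total_weight C v))) => y hy.
rewrite ler_pdivlMr // mulrC.
by apply: (Cpi_g_le admD admC) => // s => [/wD|/vC] /ltW.
Qed.

Lemma Cpi_ray (A : seq vec) pi y z : admissible g A pi -> Cpi g A pi y ->
  (forall s, s \in A -> inner (pi s) z = g z) ->
  forall t, 0 <= t -> Cpi g A pi (y + t *: z).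
Proof.
move=> adm /(CpiE _ adm) hy hz t t0; apply/(CpiE _ adm) => s sA.
apply/eqP; rewrite eq_le inner_le_g ?adm //= addrAC innerDr hy // innerZr hz //.
by rewrite -(gZp hg) //; exact: gD.
Qed.

Lemma dual_g_sum_lt (A : seq vec) pi : (0 < d)%N -> admissible g A pi ->
  Cpi g A pi !=set0 -> bounded_set (Cpi g A pi) ->
  dual_g g (\sum_(s <- undup A) pi s) < \sum_(s <- undup A) 1.
Proof.
move=> d_gt0 adm [y Cy] bnd.
have no_ray z : (forall s, s \in A -> inner (pi s) z = g z) -> z = 0.
  by move=> hz; apply: bounded_set_ray bnd (Cpi_ray adm Cy hz).
have p_le1 z s : ball_g g z -> s \in undup A -> inner (pi s) z <= 1.
  by rewrite mem_undup => gz1 sA; apply: le_trans gz1; exact: inner_le_g (adm s sA).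
rewrite lt_neqAle; apply/andP; split; last first.
  apply: (dual_g_le hg) => z gz1; rewrite inner_suml !big_seq ler_sum // => s.
  exact: p_le1.
apply/eqP => hq; have [z gz1 pz] := dual_g_attained hg (\sum_(s <- undup A) pi s).
have [A0|[s0 s0A]] : A = [::] \/ exists s0, s0 \in A.
    by case: (A) => [|s0 A']; [left | right; exists s0; exact: mem_head].
  by move/eqP: (delta_mx_neq0 R (Ordinal d_gt0)); apply; apply: no_ray => s; rewrite A0.
have p_eq1 s : s \in A -> inner (pi s) z = 1.
  move=> sA; have : \sum_(s <- undup A) (1 - inner (pi s) z) == 0.
    by rewrite sumrB -inner_suml pz hq subrr.
  have gap_ge0 t : t \in undup A -> 0 <= 1 - inner (pi t) z.
    by move/(p_le1 _ _ gz1); rewrite subr_ge0.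
  rewrite big_seq psumr_eq0 // => /allP/(_ s).
  by rewrite mem_undup sA subr_eq0 eq_sym => /(_ isT)/eqP.
have gz : g z = 1.
  by apply/eqP; rewrite eq_le gz1 -(p_eq1 s0 s0A) inner_le_g ?adm.
have z0 : z = 0 by apply: no_ray => s sA; rewrite p_eq1 ?gz.
by move: gz; rewrite z0 (g0 hg) => /eqP; rewrite eq_sym oner_eq0.
Qed.

Lemma Cpi_FW_point (A : seq vec) pi x v : admissible g A pi -> Cpi g A pi x ->
  dual_g g (\sum_(s <- undup A) pi s) <= v ->
  FW_point g (wsum_pts (undup A) [:: x]) (wsum_wt (undup A) (fun=> 1) [:: x] (fun=> v)) x.
Proof.
move=> adm /(CpiE _ adm) hx hv y.
rewrite /fw_obj !big_wsum_mul ?undup_uniq // !big_seq1 subrr (g0 hg) mulr0 addr0.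
pose q := \sum_(s <- undup A) pi s.
have hA : \sum_(s <- undup A) 1 * g (x - s) + inner q (y - x) <=
    \sum_(s <- undup A) 1 * g (y - s).
  rewrite inner_suml -big_split !big_seq ler_sum //= => s; rewrite mem_undup => sA.
  by rewrite !mul1r -hx // -innerDr addrC addrA subrK inner_le_g ?adm.
have hq : - inner q (y - x) <= v * g (y - x).
  rewrite -innerNr; apply: le_trans (inner_le_dual_g hg _ _) _.
  by rewrite (gN hg) ler_wpM2r ?(g_ge0 hg).
lra.
Qed.

Lemma bounded_EH_of_uniformly_robust :
  uniformly_robust g -> forall A, bounded_set (EH g A).
Proof.
move=> hUR A; have [d0|d_gt0] := posnP d; first exact: bounded_set_dim0.
have [K [[MK hMK] hK]] := hUR (undup A) (fun=> 1) (conj (undup_uniq A) (fun _ _ => ltr01)).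
exists MK => x [pi [adm [ne [bnd Cx]]]]; apply: hMK.
have q_lt := dual_g_sum_lt d_gt0 adm ne bnd.
have q_ge0 := dual_g_ge0 hg (\sum_(s <- undup A) pi s).
pose v := (dual_g g (\sum_(s <- undup A) pi s) + \sum_(s <- undup A) 1) / 2.
apply: (hK [:: x] (fun=> v)) (Cpi_FW_point adm Cx _).
- by split => // s _; rewrite /v; lra.
- by rewrite skewness_norm // mul1r /total_weight big_seq1 /v; lra.
- by rewrite /v; lra.
Qed.

End Robust.

Theorem mainTheorem12 (R : realType) (d : nat) (g : 'rV[R]_d -> R) :
  is_norm g ->
  (uniformly_robust g <-> forall A : seq 'rV[R]_d, bounded_set (EH g A)).
Proof.
move=> hg; split; first exact: bounded_EH_of_uniformly_robust.
exact: uniformly_robust_of_bounded_EH.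
Qed.
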